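(* Let $T$, $\mathcal{S}=\mathcal{S}_+\cup\mathcal{S}_-$, $\Psi$, $U$, $\lambda,\mu$, $P_\lambda,P_\mu$ and $W$ be as in the context. Consider the discrete-time QBD on phase space $\mathcal{S}$ with transition blocks $$C'_{-1}=\frac12\begin{bmatrix}0&P_{\mu+-}\\0&P_{\mu--}\end{bmatrix},\quad C'_0=\frac12\begin{bmatrix}P_{\mu++}&P_{\lambda+-}\\P_{\mu-+}&P_{\lambda--}\end{bmatrix},\quad C'_1=\frac12\begin{bmatrix}P_{\lambda++}&0\\P_{\lambda-+}&0\end{bmatrix}.$$ Then it has the same $\mathcal{G}$-matrix as the QBD with blocks $$C_{-1}=\begin{bmatrix}0&(I-\mu^{-1}T_{++})^{-1}P_{\mu+-}\\0&W\end{bmatrix},\ C_0=\begin{bmatrix}0&(I-\mu^{-1}T_{++})^{-1}P_{\lambda+-}\\0&0\end{bmatrix},\ C_1=\begin{bmatrix}(I-\mu^{-1}T_{++})^{-1}P_{\lambda++}&0\\0&0\end{bmatrix};$$ that is, its $\mathcal{G}$-matrix equals $\begin{bmatrix}0&\Psi\\0&W\end{bmatrix}$.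
   Context: $T$ is the generator of a continuous-time Markov chain on a finite set $\mathcal{S}=\mathcal{S}_+\cup\mathcal{S}_-$ (disjoint, both nonempty), partitioned into blocks $T_{++},T_{+-},T_{-+},T_{--}$ according to $\mathcal{S}_\pm$. $\Psi$ is the minimal nonnegative solution of $T_{+-}+\Psi T_{--}+T_{++}\Psi+\Psi T_{-+}\Psi=0$ (the first-return probability matrix of the unit-rate fluid queue with phase generator $T$, rates $+1$ on $\mathcal{S}_+$ and $-1$ on $\mathcal{S}_-$), and $U:=T_{--}+T_{-+}\Psi$. $\lambda,\mu>0$ satisfy $\lambda,\mu\ge\max_i|T_{ii}|$; $P_\lambda:=I+\lambda^{-1}T$, $P_\mu:=I+\mu^{-1}T$ with blocks $P_{\lambda++}$ etc.; $W:=(I+\mu^{-1}U)(I-\lambda^{-1}U)^{-1}$. A discrete-time quasi-birth-death process (QBD) with transition blocks $L_{-1},L_0,L_1$ is a Markov chain $\{(Y_n,\kappa_n)\}$ on $\mathbb{Z}\times\mathcal{S}$ with $\mathbb{P}[Y_n=k+d,\kappa_n=j\mid Y_{n-1}=k,\kappa_{n-1}=i]=(L_d)_{ij}$ for $d\in\{-1,0,1\}$. Its $\mathcal{G}$-matrix has entries $\mathcal{G}_{ij}=\mathbb{P}[\theta<\infty,\kappa_\theta=j\mid Y_0=k,\kappa_0=i]$ with $\theta=\inf\{n>0:Y_n=k-1\}$. Matrices are partitioned into blocks according to $\mathcal{S}_+,\mathcal{S}_-$. *)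

From HB Require Import structures.
From mathcomp Require Import all_boot all_order all_algebra.
From mathcomp Require Import all_classical all_reals all_analysis.
Set Implicit Arguments. Unset Strict Implicit. Unset Printing Implicit Defensive.
Import Order.TTheory GRing.Theory Num.Theory.
Import numFieldNormedType.Exports.
Local Open Scope ring_scope.
Local Open Scope classical_set_scope.

Section QBD.
Variable R : realType.
Variable N : nat.

(* A step of a path: (d, j) with d : 'I_3 encoding the level increment d - 1
   in {-1,0,1}, and j the phase after the step. *)
Definition qbd_path (n : nat) := {ffun 'I_n -> 'I_3 * 'I_N}.

Definition qbd_block (Lm L0 Lp : 'M[R]_N) (d : 'I_3) : 'M[R]_N :=
  if val d == 0%N then Lm else if val d == 1%N then L0 else Lp.

Definition qbd_level n (w : qbd_path n) (k : nat) : int :=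
  \sum_(t < n | (t < k)%N) (((w t).1 : nat)%:Z - 1).

(* phase at time k (the starting phase is i) *)
Definition qbd_phase n (i : 'I_N) (w : qbd_path n) (k : nat) : 'I_N :=
  if k is k'.+1 then odflt i (omap (fun t : 'I_n => (w t).2) (insub k')) else i.

Definition qbd_pathprob (Lm L0 Lp : 'M[R]_N) n (i : 'I_N) (w : qbd_path n) : R :=
  \prod_(t < n) qbd_block Lm L0 Lp (w t).1 (qbd_phase i w t) (w t).2.

(* the path w, started at level k phase i, first reaches level k-1 at time n,
   in phase j *)
Definition qbd_first_passage n (i j : 'I_N) (w : qbd_path n) : bool :=
  [forall t : 'I_n, (t.+1 < n)%N ==> (0 <= qbd_level w t.+1)]
  && (qbd_level w n == -1) && (qbd_phase i w n == j).

(* P[theta = n, kappa_theta = j | Y_0 = k, kappa_0 = i] *)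
Definition qbd_fpt (Lm L0 Lp : 'M[R]_N) n (i j : 'I_N) : R :=
  \sum_(w : qbd_path n | qbd_first_passage i j w) qbd_pathprob Lm L0 Lp i w.

(* G is the G-matrix of the QBD (L_{-1}, L_0, L_1):
   G_ij = P[theta < oo, kappa_theta = j | ...] = sum_n P[theta = n, ...]. *)
Definition is_Gmatrix (Lm L0 Lp G : 'M[R]_N) : Prop :=
  forall i j : 'I_N,
    (fun K : nat => \sum_(0 <= n < K) qbd_fpt Lm L0 Lp n i j) @ \oo --> G i j.

End QBD.

Section Fluid.
Variable R : realType.

Definition is_generator n (T : 'M[R]_n) : Prop :=
  (forall i j, i != j -> 0 <= T i j) /\ (forall i, \sum_j T i j = 0).

Definition mx_nonneg m n (X : 'M[R]_(m, n)) : Prop := forall i j, 0 <= X i j.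

Definition psi_riccati p m (T : 'M[R]_(p + m)) (X : 'M[R]_(p, m)) : Prop :=
  ursubmx T + X *m drsubmx T + ulsubmx T *m X + X *m dlsubmx T *m X = 0.

Definition is_min_nonneg_sol p m (T : 'M[R]_(p + m)) (Psi : 'M[R]_(p, m)) : Prop :=
  [/\ mx_nonneg Psi, psi_riccati T Psi &
      forall X, mx_nonneg X -> psi_riccati T X -> forall i j, Psi i j <= X i j].

Definition Pmat n (T : 'M[R]_n) (a : R) : 'M[R]_n := 1%:M + a^-1 *: T.

Definition Umat p m (T : 'M[R]_(p + m)) (Psi : 'M[R]_(p, m)) : 'M[R]_m :=
  drsubmx T + dlsubmx T *m Psi.

Definition Wmat p m (T : 'M[R]_(p + m)) (Psi : 'M[R]_(p, m)) (lam mu : R) : 'M[R]_m :=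
  (1%:M + mu^-1 *: Umat T Psi) *m invmx (1%:M - lam^-1 *: Umat T Psi).

End Fluid.

From HB Require Import structures.
From mathcomp Require Import all_boot all_order all_algebra.
From mathcomp Require Import all_classical all_reals all_analysis.
From mathcomp Require Import zify.
From mathcomp.algebra_tactics Require Import ring lra.
Import Order.TTheory GRing.Theory Num.Theory.
Import numFieldNormedType.Exports.
Set Implicit Arguments. Unset Strict Implicit. Unset Printing Implicit Defensive.
Local Open Scope ring_scope.

(* Both QBDs are skip-free downwards, so their G-matrix is characterised as the
   minimal nonnegative solution of G = L_{-1} + L_0 G + L_1 G^2: the partial sums
   of first passage probabilities are dominated by any nonnegative solution and
   their limit is a post-fixed point, below which Kleene iteration finds a
   solution.  For the candidate G = [0 Psi; 0 W], a nonnegative solution X <= G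
   has zero left column, and the equations for its right column (Xb, Xd) turn
   into the Riccati equation for Xb (resp. Riccati(Xb) <= 0 when Xd = W), because
   W = (I + U/mu)(I - U/lam)^-1 is a Cayley transform of U = T_-- + T_-+ Psi.
   Minimality of Psi then forces Xb = Psi. *)

Lemma subr_eq_id (V : zmodType) (x y : V) : x - y = x -> y = 0.
Proof. by move=> /eqP; rewrite -subr_eq0 addrAC subrr add0r oppr_eq0 => /eqP. Qed.

Section EntrywiseOrder.
Variable R : realType.

Definition mxle m n (A B : 'M[R]_(m, n)) := forall i j, A i j <= B i j.

Lemma mxle_refl m n (A : 'M[R]_(m, n)) : mxle A A.
Proof. by []. Qed.

Lemma mxle_trans m n (A B C : 'M[R]_(m, n)) : mxle A B -> mxle B C -> mxle A C.
Proof. by move=> AB BC i j; exact: le_trans (AB i j) (BC i j). Qed.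

Lemma mxle_anti m n (A B : 'M[R]_(m, n)) : mxle A B -> mxle B A -> A = B.
Proof. by move=> AB BA; apply/matrixP => i j; apply/le_anti; rewrite AB BA. Qed.

Lemma mxleD m n (A B C D : 'M[R]_(m, n)) :
  mxle A B -> mxle C D -> mxle (A + C) (B + D).
Proof. by move=> AB CD i j; rewrite !mxE lerD. Qed.

Lemma mxleZ m n (a : R) (A B : 'M[R]_(m, n)) :
  0 <= a -> mxle A B -> mxle (a *: A) (a *: B).
Proof. by move=> a_ge0 AB i j; rewrite !mxE ler_wpM2l. Qed.

Lemma mxleMl m n k (A : 'M[R]_(m, n)) (B C : 'M[R]_(n, k)) :
  mx_nonneg A -> mxle B C -> mxle (A *m B) (A *m C).
Proof. by move=> A_ge0 BC i j; rewrite !mxE; apply: ler_sum => l _; rewrite ler_wpM2l. Qed.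

Lemma mxleMr m n k (A : 'M[R]_(n, k)) (B C : 'M[R]_(m, n)) :
  mx_nonneg A -> mxle B C -> mxle (B *m A) (C *m A).
Proof. by move=> A_ge0 BC i j; rewrite !mxE; apply: ler_sum => l _; rewrite ler_wpM2r. Qed.

Lemma mx_nonneg_le m n (A B : 'M[R]_(m, n)) : mx_nonneg A -> mxle A B -> mx_nonneg B.
Proof. by move=> A_ge0 AB i j; exact: le_trans (A_ge0 i j) (AB i j). Qed.

Lemma mxleM m n k (A B : 'M[R]_(m, n)) (C D : 'M[R]_(n, k)) :
  mx_nonneg A -> mx_nonneg C -> mxle A B -> mxle C D -> mxle (A *m C) (B *m D).
Proof.
move=> A_ge0 C_ge0 AB CD; apply: (@mxle_trans _ _ _ (A *m D)); first exact: mxleMl.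
by apply: mxleMr AB; exact: mx_nonneg_le CD.
Qed.

Lemma mx_nonneg_ge0 m n (A : 'M[R]_(m, n)) : mx_nonneg A -> mxle 0 A.
Proof. by move=> A_ge0 i j; rewrite mxE. Qed.

Lemma mxle_addr m n (A B : 'M[R]_(m, n)) : mx_nonneg B -> mxle A (A + B).
Proof. by move=> B_ge0 i j; rewrite mxE lerDl. Qed.

Lemma mx_nonneg0 m n : mx_nonneg (0 : 'M[R]_(m, n)).
Proof. by move=> i j; rewrite mxE. Qed.

Lemma mx_nonneg1 n : mx_nonneg (1%:M : 'M[R]_n).
Proof. by move=> i j; rewrite mxE ler0n. Qed.

Lemma mx_nonnegD m n (A B : 'M[R]_(m, n)) :
  mx_nonneg A -> mx_nonneg B -> mx_nonneg (A + B).
Proof. by move=> A_ge0 B_ge0 i j; rewrite mxE addr_ge0. Qed.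

Lemma mx_nonnegZ m n (a : R) (A : 'M[R]_(m, n)) :
  0 <= a -> mx_nonneg A -> mx_nonneg (a *: A).
Proof. by move=> a_ge0 A_ge0 i j; rewrite mxE mulr_ge0. Qed.

Lemma mx_nonnegM m n k (A : 'M[R]_(m, n)) (B : 'M[R]_(n, k)) :
  mx_nonneg A -> mx_nonneg B -> mx_nonneg (A *m B).
Proof. by move=> A_ge0 B_ge0 i j; rewrite mxE sumr_ge0 // => l _; rewrite mulr_ge0. Qed.

Lemma mx_nonneg_block m1 m2 n1 n2 (A : 'M[R]_(m1, n1)) (B : 'M[R]_(m1, n2))
    (C : 'M[R]_(m2, n1)) (D : 'M[R]_(m2, n2)) :
  mx_nonneg (block_mx A B C D) <->
  [/\ mx_nonneg A, mx_nonneg B, mx_nonneg C & mx_nonneg D].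
Proof.
split=> [X_ge0 | [A_ge0 B_ge0 C_ge0 D_ge0] i j].
  split=> i j.
  - by have := X_ge0 (lshift _ i) (lshift _ j); rewrite block_mxEul.
  - by have := X_ge0 (lshift _ i) (rshift _ j); rewrite block_mxEur.
  - by have := X_ge0 (rshift _ i) (lshift _ j); rewrite block_mxEdl.
  - by have := X_ge0 (rshift _ i) (rshift _ j); rewrite block_mxEdr.
case: (split_ordP i) => {}i ->; case: (split_ordP j) => {}j ->.
- by rewrite block_mxEul.
- by rewrite block_mxEur.
- by rewrite block_mxEdl.
- by rewrite block_mxEdr.
Qed.

Lemma mxle_block m1 m2 n1 n2 (A A' : 'M[R]_(m1, n1)) (B B' : 'M[R]_(m1, n2))
    (C C' : 'M[R]_(m2, n1)) (D D' : 'M[R]_(m2, n2)) :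
  mxle (block_mx A B C D) (block_mx A' B' C' D') <->
  [/\ mxle A A', mxle B B', mxle C C' & mxle D D'].
Proof.
split=> [le | [leA leB leC leD] i j].
  split=> i j.
  - by have := le (lshift _ i) (lshift _ j); rewrite !block_mxEul.
  - by have := le (lshift _ i) (rshift _ j); rewrite !block_mxEur.
  - by have := le (rshift _ i) (lshift _ j); rewrite !block_mxEdl.
  - by have := le (rshift _ i) (rshift _ j); rewrite !block_mxEdr.
case: (split_ordP i) => {}i ->; case: (split_ordP j) => {}j ->.
- by rewrite !block_mxEul.
- by rewrite !block_mxEur.
- by rewrite !block_mxEdl.
- by rewrite !block_mxEdr.
Qed.

Lemma nonneg_le_zero_left_column m1 m2 n1 n2
    (X : 'M[R]_(m1 + m2, n1 + n2)) B D :
  mx_nonneg X -> mxle X (block_mx 0 B 0 D) ->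
  X = block_mx 0 (ursubmx X) 0 (drsubmx X).
Proof.
rewrite -[X]submxK => /mx_nonneg_block[ul_ge0 _ dl_ge0 _] /mxle_block[ul_le _ dl_le _].
rewrite block_mxKur block_mxKdr.
by congr block_mx; apply: mxle_anti => //; exact: mx_nonneg_ge0.
Qed.

Definition ones k : 'cV[R]_k := const_mx 1.

Lemma rowsumE m n (A : 'M[R]_(m, n)) i : \sum_j A i j = (A *m ones n) i 0.
Proof. by rewrite mxE; apply: eq_bigr => j _; rewrite mxE mulr1. Qed.

Lemma mx_nonneg_ones k : mx_nonneg (ones k).
Proof. by move=> i j; rewrite mxE. Qed.

End EntrywiseOrder.

Section MMatrix.
Variables (R : realType) (n : nat) (M : 'M[R]_n).
Hypothesis M_offdiag : forall i j, i != j -> M i j <= 0.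
Hypothesis M_rowsum : forall i, 0 < \sum_j M i j.

(* If v_k = min v < 0, then (M v)_k <= v_k * (\sum_l M k l) < 0. *)
Lemma mmatrix_cV_nonneg (v : 'cV[R]_n) : mx_nonneg (M *m v) -> mx_nonneg v.
Proof.
move=> Mv_ge0 i j; rewrite (ord1 j) {j}.
pose k := [arg min_(k < i) v k 0]%O.
have v_min l : v k 0 <= v l 0 by rewrite /k; case: arg_minP => // k' _; apply.
rewrite (le_trans _ (v_min i)) // leNgt; apply/negP => vk_lt0.
have := Mv_ge0 k 0; rewrite mxE leNgt => /negP; apply.
apply: (@le_lt_trans _ _ (\sum_l M k l * v k 0)); last by rewrite -mulr_suml pmulr_rlt0.
apply: ler_sum => l _; have [-> // | lk] := eqVneq l k.
by rewrite ler_wnM2l // M_offdiag // eq_sym.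
Qed.

Lemma mmatrix_unit : M \in unitmx.
Proof.
rewrite -unitmx_tr -row_free_unit; apply: inj_row_free => v.
move=> /(congr1 trmx); rewrite trmx_mul trmxK trmx0 => Mv0.
have vT_ge0 : mx_nonneg v^T by apply: mmatrix_cV_nonneg; rewrite Mv0; exact: mx_nonneg0.
have vT_le0 : mx_nonneg (- v^T).
  by apply: mmatrix_cV_nonneg; rewrite mulmxN Mv0 oppr0; exact: mx_nonneg0.
apply/matrixP => i j; apply/le_anti; rewrite mxE.
by have := vT_ge0 j i; have := vT_le0 j i; rewrite !mxE oppr_ge0 => -> ->.
Qed.

Lemma mmatrix_inv_nonneg : mx_nonneg (invmx M).
Proof.
move=> i j; have colj_ge0 : mx_nonneg (col j (invmx M)).
  apply: mmatrix_cV_nonneg => k l.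
  by rewrite colE mulmxA mulmxV ?mmatrix_unit // mul1mx !mxE ler0n.
by have := colj_ge0 i 0; rewrite mxE.
Qed.

End MMatrix.

Section Resolvent.
Variables (R : realType) (n : nat) (M : 'M[R]_n) (a : R).
Hypotheses (a_gt0 : 0 < a) (M_offdiag : forall i j, i != j -> 0 <= M i j).

Lemma Pmat_nonneg : (forall i, - a <= M i i) -> mx_nonneg (Pmat M a).
Proof.
move=> M_diag i j; rewrite !mxE; have [<- | ij] := eqVneq i j.
  rewrite mulr1n -(mulVf (lt0r_neq0 a_gt0)) -mulrDr mulr_ge0 ?invr_ge0 ?(ltW a_gt0) //.
  by rewrite -lerBlDl sub0r.
by rewrite mulr0n add0r mulr_ge0 ?M_offdiag // invr_ge0 ltW.
Qed.

Lemma resolvent_unit_nonneg : mxle (M *m ones R n) 0 ->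
  (1%:M - a^-1 *: M) \in unitmx /\ mx_nonneg (invmx (1%:M - a^-1 *: M)).
Proof.
move=> M_rowsum.
have offdiag i j : i != j -> (1%:M - a^-1 *: M) i j <= 0.
  move=> ij; rewrite !mxE (negbTE ij) mulr0n sub0r oppr_le0.
  by rewrite mulr_ge0 ?M_offdiag // invr_ge0 ltW.
have rowsum i : 0 < \sum_j (1%:M - a^-1 *: M) i j.
  rewrite rowsumE mulmxBl mul1mx -scalemxAl; set s := M *m ones R n.
  have := M_rowsum i 0; rewrite !mxE => si_le0.
  by rewrite subr_gt0 (le_lt_trans (mulr_ge0_le0 _ si_le0)) ?ltr01 // invr_ge0 ltW.
by split; [exact: mmatrix_unit | exact: mmatrix_inv_nonneg].
Qed.

End Resolvent.

Section Cayley.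
Variables (R : realType) (k : nat) (a b : R) (U : 'M[R]_k).

Definition cayley := (1%:M + b *: U) *m invmx (1%:M - a *: U).

Lemma cayley_factors_commute :
  (1%:M - a *: U) *m (1%:M + b *: U) = (1%:M + b *: U) *m (1%:M - a *: U).
Proof.
rewrite !mulmxDl !mulmxDr !mulNmx !mulmxN !mul1mx !mulmx1.
by rewrite -!scalemxAl -!scalemxAr !scalerA mulrC addrACA.
Qed.

Hypothesis unit_U : (1%:M - a *: U) \in unitmx.

Lemma cayley_mulr : cayley *m (1%:M - a *: U) = 1%:M + b *: U.
Proof. exact: mulmxKV. Qed.

Lemma cayley_mull : (1%:M - a *: U) *m cayley = 1%:M + b *: U.
Proof. by rewrite /cayley mulmxA cayley_factors_commute mulmxK. Qed.

Lemma cayley_unique Y : (1%:M - a *: U) *m Y = 1%:M + b *: U -> Y = cayley.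
Proof.
move=> eqY; apply: (can_inj (mulKmx unit_U)).
by rewrite eqY cayley_mull.
Qed.

(* Right multiplication by the unit 1 - aU turns 1 - Y into -(a + b)U and
   b + aY into (a + b). *)
Lemma cayley_relation l (K H : 'M[R]_(l, k)) : a + b != 0 ->
  (K *m (1%:M - cayley) == H *m (b *: 1%:M + a *: cayley)) = (H + K *m U == 0).
Proof.
move=> ab_neq0.
have E1 : (1%:M - cayley) *m (1%:M - a *: U) = - ((a + b) *: U).
  rewrite mulmxBl mul1mx cayley_mulr.
  by apply/matrixP => i j; rewrite !mxE; ring.
have E2 : (b *: 1%:M + a *: cayley) *m (1%:M - a *: U) = (a + b) *: 1%:M.
  rewrite mulmxDl -!scalemxAl mul1mx cayley_mulr.
  by apply/matrixP => i j; rewrite !mxE; ring.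
rewrite -(can_eq (mulmxK unit_U)) -!mulmxA E1 E2 mulmxN -!scalemxAr mulmx1.
by rewrite eq_sym -subr_eq0 opprK -scalerDr scaler_eq0 (negbTE ab_neq0).
Qed.

End Cayley.

Section EntrywiseConvergence.
Variable R : realType.
Local Open Scope classical_set_scope.

Definition mxcvg m n (X : nat -> 'M[R]_(m, n)) (L : 'M[R]_(m, n)) :=
  forall i j, (fun k => X k i j) @ \oo --> L i j.

Lemma mxcvg_cst m n (A : 'M[R]_(m, n)) : mxcvg (fun=> A) A.
Proof. by move=> i j; exact: cvg_cst. Qed.

Lemma mxcvgD m n (X Y : nat -> 'M[R]_(m, n)) A B :
  mxcvg X A -> mxcvg Y B -> mxcvg (fun k => X k + Y k) (A + B).
Proof. by move=> XA YB i j; rewrite mxE; under eq_cvg do rewrite mxE; exact: cvgD. Qed.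

Lemma mxcvgZ m n (a : R) (X : nat -> 'M[R]_(m, n)) A :
  mxcvg X A -> mxcvg (fun k => a *: X k) (a *: A).
Proof.
by move=> XA i j; rewrite mxE; under eq_cvg do rewrite mxE; exact: cvgM (cvg_cst a) (XA i j).
Qed.

Lemma mxcvgM m n l (X : nat -> 'M[R]_(m, n)) (Y : nat -> 'M[R]_(n, l)) A B :
  mxcvg X A -> mxcvg Y B -> mxcvg (fun k => X k *m Y k) (A *m B).
Proof.
move=> XA YB i j; rewrite mxE; under eq_cvg do rewrite mxE.
by apply: cvg_big => // [|h _]; [exact: add_continuous | exact: cvgM].
Qed.

Lemma mxcvg_le m n (X Y : nat -> 'M[R]_(m, n)) A B :
  mxcvg X A -> mxcvg Y B -> (forall k, mxle (X k) (Y k)) -> mxle A B.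
Proof.
move=> XA YB XY i j; apply: ler_cvg_to (XA i j) (YB i j) _.
by apply: nearW => k; exact: XY.
Qed.

Lemma mxcvg_unique m n (X : nat -> 'M[R]_(m, n)) A B :
  mxcvg X A -> mxcvg X B -> A = B.
Proof.
move=> XA XB; apply: mxle_anti.
  exact: mxcvg_le XA XB (fun=> mxle_refl _).
exact: mxcvg_le XB XA (fun=> mxle_refl _).
Qed.

Lemma mxcvgS m n (X : nat -> 'M[R]_(m, n)) A :
  mxcvg X A -> mxcvg (fun k => X k.+1) A.
Proof. by move=> XA i j; have := XA i j; rewrite -cvg_shiftS. Qed.

Lemma nondecreasing_mxcvg m n (X : nat -> 'M[R]_(m, n)) B :
  (forall k, mxle (X k) (X k.+1)) -> (forall k, mxle (X k) B) ->
  exists2 L, mxcvg X L & forall k, mxle (X k) L.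
Proof.
move=> X_incr X_le.
have nd i j : nondecreasing_seq (fun k => X k i j).
  by apply/nondecreasing_seqP => k; exact: X_incr.
have ub i j : has_ubound (range (fun k => X k i j)).
  by exists (B i j) => _ [k _ <-]; exact: X_le.
exists (\matrix_(i, j) limn (fun k => X k i j)) => [i j | k i j]; rewrite mxE.
  exact: nondecreasing_is_cvgn.
by apply: nondecreasing_cvgn_le => //; exact: nondecreasing_is_cvgn.
Qed.

Lemma iter_mxcvg_fixpoint m n (F : 'M[R]_(m, n) -> 'M[R]_(m, n)) B :
  (forall X Y, mx_nonneg X -> mxle X Y -> mxle (F X) (F Y)) ->
  mx_nonneg (F 0) ->
  (forall X L, mxcvg X L -> mxcvg (fun k => F (X k)) (F L)) ->
  mx_nonneg B -> mxle (F B) B ->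
  exists L, [/\ mx_nonneg L, mxle L B, F L = L & mxcvg (fun k => iter k F 0) L].
Proof.
move=> F_mono F0_ge0 F_cont B_ge0 FB_le.
have iter_ge0 k : mx_nonneg (iter k F 0).
  elim: k => [|k IH] /=; first exact: mx_nonneg0.
  apply: mx_nonneg_le F0_ge0 _; apply: F_mono; [exact: mx_nonneg0 | exact: mx_nonneg_ge0].
have iter_incr k : mxle (iter k F 0) (iter k.+1 F 0).
  by elim: k => [|k IH] /=; [exact: mx_nonneg_ge0 | exact: F_mono].
have iter_le k : mxle (iter k F 0) B.
  elim: k => [|k IH] /=; first exact: mx_nonneg_ge0.
  by apply: mxle_trans FB_le; exact: F_mono.
have [L iterL iter_leL] := nondecreasing_mxcvg iter_incr iter_le.
exists L; split => //.
- exact: mx_nonneg_le (iter_ge0 0%N) (iter_leL 0%N).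
- by apply: mxcvg_le iterL _ iter_le; exact: mxcvg_cst.
- exact: mxcvg_unique (F_cont _ _ iterL) (mxcvgS iterL).
Qed.

End EntrywiseConvergence.

Lemma forall_ordS n (P : pred 'I_n.+1) :
  [forall t, P t] = P ord0 && [forall t : 'I_n, P (lift ord0 t)].
Proof.
apply/forallP/andP => [P_all | [P0 /forallP P_lift] t]; first by split => //; apply/forallP.
by case: (unliftP ord0 t) => [t' ->|->].
Qed.

Section Paths.
Variable N : nat.

Definition path_cons n (s : 'I_3 * 'I_N) (w : qbd_path N n) : qbd_path N n.+1 :=
  [ffun t => if unlift ord0 t is Some t' then w t' else s].

Definition path_behead n (w : qbd_path N n.+1) : qbd_path N n :=
  [ffun t => w (lift ord0 t)].

Lemma path_cons0 n s (w : qbd_path N n) : path_cons s w ord0 = s.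
Proof. by rewrite ffunE unlift_none. Qed.

Lemma path_consS n s (w : qbd_path N n) t : path_cons s w (lift ord0 t) = w t.
Proof. by rewrite ffunE liftK. Qed.

Lemma path_consK n (w : qbd_path N n.+1) : path_cons (w ord0) (path_behead w) = w.
Proof. by apply/ffunP => t; rewrite ffunE; case: unliftP => [t' ->|->]; rewrite ?ffunE. Qed.

Lemma path_beheadK n s (w : qbd_path N n) : path_behead (path_cons s w) = w.
Proof. by apply/ffunP => t; rewrite ffunE path_consS. Qed.

Lemma sum_qbd_pathS (V : nmodType) n (F : qbd_path N n.+1 -> V) :
  \sum_(w : qbd_path N n.+1) F w =
  \sum_(s : 'I_3 * 'I_N) \sum_(w : qbd_path N n) F (path_cons s w).
Proof.
rewrite pair_big (reindex (fun x : _ * qbd_path N n => path_cons x.1 x.2)) //=.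
exists (fun w : qbd_path N n.+1 => (w ord0, path_behead w)) => [[s w] _ | w _] /=.
  by rewrite path_cons0 path_beheadK.
by rewrite path_consK.
Qed.

Lemma qbd_level0 n (w : qbd_path N n) : qbd_level w 0 = 0.
Proof. by rewrite /qbd_level big_pred0. Qed.

Lemma qbd_level_cons n s (w : qbd_path N n) k :
  qbd_level (path_cons s w) k.+1 = (s.1 : nat)%:Z - 1 + qbd_level w k.
Proof.
rewrite /qbd_level big_mkcond big_ord_recl /= path_cons0 [in RHS]big_mkcond.
by congr (_ + _); apply: eq_bigr => t _; rewrite path_consS /bump add1n ltnS.
Qed.

Lemma qbd_phase_cons n s (w : qbd_path N n) i k : (k <= n)%N ->
  qbd_phase i (path_cons s w) k.+1 = qbd_phase s.2 w k.
Proof.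
rewrite /qbd_phase; case: k => [|k] le_kn.
  case: insubP => [t _ t0|] //=.
  have -> : t = ord0 by exact: val_inj.
  by rewrite path_cons0.
case: insubP => [t _ tk|]; last by rewrite ltnS le_kn.
case: insubP => [t' _ t'k|]; last by rewrite le_kn.
have -> : t = lift ord0 t' by apply: val_inj; rewrite /= /bump add1n tk t'k.
by rewrite /= path_consS.
Qed.

(* Unlike qbd_first_passage, the level constraint also covers t = 0: then
   d = 0 admits only the empty path, and the recursion qbd_first_hit_cons holds
   for every d. *)
Definition qbd_first_hit d n i j (w : qbd_path N n) : bool :=
  [forall t : 'I_n, - (d%:Z) < qbd_level w t]
  && (qbd_level w n == - (d%:Z)) && (qbd_phase i w n == j).

Lemma qbd_first_hit0 n i j (w : qbd_path N n) :
  qbd_first_hit 0 i j w = (n == 0%N) && (i == j).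
Proof.
case: n w => [|n] w; rewrite /qbd_first_hit.
  by rewrite qbd_level0 (_ : [forall t : 'I_0, _]) //; apply/forallP => -[].
by rewrite forall_ordS qbd_level0 ltxx.
Qed.

Lemma qbd_first_hit_cons d n s (w : qbd_path N n) i j :
  qbd_first_hit d.+1 i j (path_cons s w) = qbd_first_hit (d + s.1) s.2 j w.
Proof.
rewrite /qbd_first_hit forall_ordS qbd_level0 qbd_level_cons qbd_phase_cons //.
have -> : - (d.+1%:Z) < 0 = true by [].
congr (_ && _ && _).
  by apply: eq_forallb => t; rewrite lift0 qbd_level_cons; apply/idP/idP; lia.
by apply/eqP/eqP; lia.
Qed.

Lemma qbd_first_passageE n i j (w : qbd_path N n) :
  qbd_first_passage i j w = qbd_first_hit 1 i j w.
Proof.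
rewrite /qbd_first_passage /qbd_first_hit; congr (_ && _ && _).
case: n w => [|n] w; first by apply/forallP/forallP => _ [].
rewrite [RHS]forall_ordS /= qbd_level0 /=; apply/forallP/forallP => [above t | above t].
  rewrite /bump leq0n add1n.
  by have := above (widen_ord (leqnSn n) t); rewrite /= ltnS ltn_ord /=; lia.
apply/implyP; rewrite ltnS => lt_tn; have := above (Ordinal lt_tn).
by rewrite /bump leq0n add1n /=; lia.
Qed.

End Paths.

Section FirstPassage.
Variables (R : realType) (N : nat) (Lm L0 Lp : 'M[R]_N).

Local Notation block := (qbd_block Lm L0 Lp).
Local Notation pathprob := (qbd_pathprob Lm L0 Lp).

Lemma qbd_pathprob_cons n s (w : qbd_path N n) i :
  pathprob i (path_cons s w) = block s.1 i s.2 * pathprob s.2 w.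
Proof.
rewrite /qbd_pathprob big_ord_recl path_cons0; congr (_ * _).
by apply: eq_bigr => t _; rewrite path_consS lift0 qbd_phase_cons // ltnW.
Qed.

Definition passage_mx d n : 'M[R]_N :=
  \matrix_(i, j) \sum_(w : qbd_path N n | qbd_first_hit d i j w) pathprob i w.

Lemma passage_mxE d n i j :
  passage_mx d n i j = \sum_(w : qbd_path N n | qbd_first_hit d i j w) pathprob i w.
Proof. by rewrite mxE. Qed.

Lemma passage_mx0 n : passage_mx 0 n = (n == 0%N)%:R%:M.
Proof.
apply/matrixP => i j; rewrite !mxE; under eq_bigl do rewrite qbd_first_hit0.
case: n => [|n]; last by rewrite big_pred0 // mul0rn.
have [_ | _] := eqVneq i j; last by rewrite big_pred0.
under eq_bigr do rewrite /qbd_pathprob big_ord0.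
by rewrite big_const card_ffun card_ord expn0 /= addr0.
Qed.

Lemma passage_mxS0 d : passage_mx d.+1 0 = 0.
Proof.
apply/matrixP => i j; rewrite !mxE big_pred0 // => w.
by rewrite /qbd_first_hit qbd_level0 andbC; case: eqP => //; lia.
Qed.

Lemma passage_mxSS d n :
  passage_mx d.+1 n.+1 =
  Lm *m passage_mx d n + L0 *m passage_mx d.+1 n + Lp *m passage_mx d.+2 n.
Proof.
apply/matrixP => i j; rewrite !mxE big_mkcond sum_qbd_pathS.
under eq_bigr => s _.
  under eq_bigr do rewrite qbd_first_hit_cons qbd_pathprob_cons.
  rewrite -big_mkcond -mulr_sumr -passage_mxE.
  over.
rewrite -(pair_bigA _ (fun e k => block e i k * (passage_mx (d + e) n) k j)) /=.
by rewrite !big_ord_recl big_ord0 addr0 addn0 addn1 addn2 addrA.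
Qed.

Definition passage_upto d K : 'M[R]_N := \sum_(0 <= n < K) passage_mx d n.

Lemma passage_upto0 d : passage_upto d 0 = 0.
Proof. by rewrite /passage_upto big_geq. Qed.

Lemma passage_uptoS d K : passage_upto d K.+1 = passage_upto d K + passage_mx d K.
Proof. by rewrite /passage_upto big_nat_recr. Qed.

Lemma passage_upto_level0 K : passage_upto 0 K.+1 = 1%:M.
Proof.
rewrite /passage_upto big_nat_recl // passage_mx0 big1 ?addr0 // => n _.
by rewrite passage_mx0 raddf0.
Qed.

Lemma passage_uptoSS d K :
  passage_upto d.+1 K.+1 =
  Lm *m passage_upto d K + L0 *m passage_upto d.+1 K + Lp *m passage_upto d.+2 K.
Proof.
rewrite /passage_upto big_nat_recl // passage_mxS0 add0r.
under eq_bigr do rewrite passage_mxSS.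
by rewrite !big_split /= !mulmx_sumr.
Qed.

Lemma qbd_fpt_sum K i j :
  \sum_(0 <= n < K) qbd_fpt Lm L0 Lp n i j = passage_upto 1 K i j.
Proof.
rewrite /passage_upto summxE; apply: eq_bigr => n _.
by rewrite passage_mxE; apply: eq_bigl => w; rewrite qbd_first_passageE.
Qed.

Hypotheses (Lm_ge0 : mx_nonneg Lm) (L0_ge0 : mx_nonneg L0) (Lp_ge0 : mx_nonneg Lp).

Lemma passage_mx_nonneg d n : mx_nonneg (passage_mx d n).
Proof.
move=> i j; rewrite passage_mxE; apply: sumr_ge0 => w _; apply: prodr_ge0 => t _.
by rewrite /qbd_block; case: ifP => _ //; case: ifP.
Qed.

Lemma passage_upto_nonneg d K : mx_nonneg (passage_upto d K).
Proof.
elim: K => [|K IH]; first by rewrite passage_upto0; exact: mx_nonneg0.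
by rewrite passage_uptoS; apply: mx_nonnegD IH _; exact: passage_mx_nonneg.
Qed.

Lemma passage_upto_mono d K1 K2 :
  (K1 <= K2)%N -> mxle (passage_upto d K1) (passage_upto d K2).
Proof.
move=> /subnK <-; elim: (K2 - K1)%N => [|k IH]; first exact: mxle_refl.
apply: mxle_trans IH _; rewrite addSn passage_uptoS.
by apply: mxle_addr; exact: passage_mx_nonneg.
Qed.

Definition Gmap X := Lm + L0 *m X + Lp *m (X *m X).

Lemma Gmap_mono X Y : mx_nonneg X -> mxle X Y -> mxle (Gmap X) (Gmap Y).
Proof.
move=> X_ge0 XY; apply: mxleD; first apply: mxleD.
- exact: mxle_refl.
- exact: mxleMl.
- by apply: mxleMl => //; exact: mxleM.
Qed.

Lemma Gmap_mxcvg (X : nat -> 'M[R]_N) L :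
  mxcvg X L -> mxcvg (fun k => Gmap (X k)) (Gmap L).
Proof.
move=> XL; apply: mxcvgD; first apply: mxcvgD.
- exact: mxcvg_cst.
- by apply: mxcvgM => //; exact: mxcvg_cst.
- by apply: mxcvgM; [exact: mxcvg_cst | exact: mxcvgM].
Qed.

Lemma passage_upto_le_expr G : mx_nonneg G -> Gmap G = G ->
  forall K d, mxle (passage_upto d K) (G ^+ d).
Proof.
move=> G_ge0 GG; have Gpow_ge0 d : mx_nonneg (G ^+ d).
  elim: d => [|d IH]; rewrite ?expr0 ?exprS -?mulmxE; first exact: mx_nonneg1.
  exact: mx_nonnegM.
elim=> [|K IH] [|d]; rewrite ?passage_upto0 ?passage_upto_level0.
- exact: mx_nonneg_ge0.
- exact: mx_nonneg_ge0.
- exact: mxle_refl.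
have -> : G ^+ d.+1 = Lm *m G ^+ d + L0 *m G ^+ d.+1 + Lp *m G ^+ d.+2.
  by rewrite exprS -mulmxE -{1}GG /Gmap !mulmxDl -!mulmxA !mulmxE -!exprS.
rewrite passage_uptoSS; apply: mxleD; first apply: mxleD; exact: mxleMl.
Qed.

Lemma passage_upto_mul d d' K K' :
  mxle (passage_upto d K *m passage_upto d' K') (passage_upto (d + d') (K + K')).
Proof.
elim: K d d' K' => [|K IH] d d' K'.
  by rewrite passage_upto0 mul0mx; apply: mx_nonneg_ge0; exact: passage_upto_nonneg.
case: d => [|d].
  by rewrite passage_upto_level0 mul1mx add0n; apply: passage_upto_mono; exact: leq_addl.
rewrite passage_uptoSS !mulmxDl -!mulmxA !addSn passage_uptoSS.
by apply: mxleD; first apply: mxleD; apply: mxleMl => //; rewrite -?addSn; exact: IH.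
Qed.

(* The partial sums S_K of first passage probabilities one level down increase
   to a limit L below any solution G; since S_(K+K+2) dominates
   Lm + L0 S_K + Lp S_K S_K, L is a post-fixed point of Gmap, which carries a
   fixed point below L, hence below G. *)
Theorem is_Gmatrix_minimal_fixpoint G :
  mx_nonneg G -> Gmap G = G ->
  (forall X, mx_nonneg X -> mxle X G -> Gmap X = X -> mxle G X) ->
  is_Gmatrix Lm L0 Lp G.
Proof.
move=> G_ge0 GG G_min.
have S_le_G K : mxle (passage_upto 1 K) G.
  by have := passage_upto_le_expr G_ge0 GG K 1; rewrite expr1.
have S_incr K : mxle (passage_upto 1 K) (passage_upto 1 K.+1).
  exact: passage_upto_mono.
have [L SL S_le_L] := nondecreasing_mxcvg S_incr S_le_G.
have L_le_G : mxle L G by apply: mxcvg_le SL _ S_le_G; exact: mxcvg_cst.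
have L_ge0 : mx_nonneg L := mx_nonneg_le (passage_upto_nonneg 1 0) (S_le_L 0%N).
have GmapL_le : mxle (Gmap L) L.
  apply: mxcvg_le (Gmap_mxcvg SL) _ _; first exact: mxcvg_cst.
  move=> K; apply: mxle_trans (S_le_L (K + K).+2).
  rewrite passage_uptoSS passage_upto_level0 mulmx1.
  apply: mxleD; first apply: mxleD; first exact: mxle_refl.
    by apply: mxleMl => //; apply: passage_upto_mono; lia.
  apply: mxleMl => //; apply: mxle_trans (passage_upto_mul 1 1 K K) _.
  by apply: passage_upto_mono; lia.
have Gmap0_ge0 : mx_nonneg (Gmap 0) by rewrite /Gmap !mulmx0 !addr0.
have [F [F_ge0 F_le_L GF _]] :=
  iter_mxcvg_fixpoint Gmap_mono Gmap0_ge0 Gmap_mxcvg L_ge0 GmapL_le.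
have G_le_F := G_min F F_ge0 (mxle_trans F_le_L L_le_G) GF.
have -> : G = L := mxle_anti (mxle_trans G_le_F F_le_L) L_le_G.
by move=> i j; under eq_cvg do rewrite qbd_fpt_sum; exact: SL.
Qed.

End FirstPassage.

Lemma Pmat_generator_nonneg (R : realType) n (T : 'M[R]_n) a :
  is_generator T -> 0 < a -> (forall i, `|T i i| <= a) -> mx_nonneg (Pmat T a).
Proof.
move=> [T_offdiag _] a_gt0 T_diag; apply: Pmat_nonneg => // i.
by have := T_diag i; rewrite ler_norml => /andP[].
Qed.

Section GeneratorBlocks.
Variables (R : realType) (p m : nat) (T : 'M[R]_(p + m)).

Local Notation A := (ulsubmx T).
Local Notation B := (ursubmx T).
Local Notation C := (dlsubmx T).
Local Notation D := (drsubmx T).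

Lemma Pmat_block a :
  Pmat T a = block_mx (Pmat A a) (a^-1 *: B) (a^-1 *: C) (Pmat D a).
Proof.
rewrite /Pmat -{1}[T]submxK (scalar_mx_block p m 1) scale_block_mx add_block_mx.
by rewrite !add0r.
Qed.

Hypothesis T_gen : is_generator T.

Lemma generator_ul_offdiag i j : i != j -> 0 <= A i j.
Proof. by move=> ij; rewrite !mxE; case: T_gen => -> //; rewrite eq_lshift. Qed.

Lemma generator_dr_offdiag i j : i != j -> 0 <= D i j.
Proof. by move=> ij; rewrite !mxE; case: T_gen => -> //; rewrite eq_rshift. Qed.

Lemma generator_ur_nonneg : mx_nonneg B.
Proof. by move=> i j; rewrite !mxE; case: T_gen => -> //; rewrite eq_lrshift. Qed.

Lemma generator_dl_nonneg : mx_nonneg C.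
Proof. by move=> i j; rewrite !mxE; case: T_gen => -> //; rewrite eq_rlshift. Qed.

Lemma generator_rowsum_blocks :
  A *m ones R p + B *m ones R m = 0 /\ C *m ones R p + D *m ones R m = 0.
Proof.
have T1 : T *m ones R (p + m) = 0.
  by apply/matrixP => i j; rewrite (ord1 j) -rowsumE mxE; case: T_gen.
move: T1; rewrite -{1}[T]submxK /ones -col_mx_const mul_block_col -col_mx0.
by move=> /eq_col_mx.
Qed.

Lemma Pmat_blocks_nonneg a : 0 < a -> (forall i, `|T i i| <= a) ->
  [/\ mx_nonneg (Pmat A a), mx_nonneg (a^-1 *: B), mx_nonneg (a^-1 *: C)
     & mx_nonneg (Pmat D a)].
Proof.
move=> a_gt0 T_diag; apply/mx_nonneg_block; rewrite -Pmat_block.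
exact: Pmat_generator_nonneg.
Qed.

End GeneratorBlocks.

Section FluidQueue.
Variables (R : realType) (p m : nat) (T : 'M[R]_(p + m)) (Psi : 'M[R]_(p, m)).
Variables (lam mu : R).
Hypotheses (T_gen : is_generator T) (Psi_min : is_min_nonneg_sol T Psi).
Hypotheses (lam_gt0 : 0 < lam) (mu_gt0 : 0 < mu).
Hypotheses (T_diag_lam : forall i, `|T i i| <= lam) (T_diag_mu : forall i, `|T i i| <= mu).

Local Notation A := (ulsubmx T).
Local Notation B := (ursubmx T).
Local Notation C := (dlsubmx T).
Local Notation D := (drsubmx T).
Local Notation U := (Umat T).
(* By definition, W is cayley lam^-1 mu^-1 (U Psi). *)
Local Notation W := (Wmat T Psi lam mu).

Definition riccati X := B + X *m D + A *m X + X *m C *m X.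

Lemma riccati_UmatE X : riccati X = B + A *m X + X *m U X.
Proof. by rewrite /riccati /Umat mulmxDr mulmxA addrA; congr (_ + _); rewrite addrAC. Qed.

Lemma Psi_nonneg : mx_nonneg Psi.
Proof. by case: Psi_min. Qed.

Lemma riccati_Psi : riccati Psi = 0.
Proof. by case: Psi_min. Qed.

Lemma Psi_minimal X : mx_nonneg X -> riccati X = 0 -> mxle Psi X.
Proof. by case: Psi_min => _ _ Psi_le X_ge0 ricX i j; exact: Psi_le. Qed.

(* X + (2 mu)^-1 riccati X: the factor 1/2 shares the identity between the
   diagonals of A and D, so that both Pmat blocks are nonnegative. *)
Definition riccati_map X :=
  2^-1 *: (mu^-1 *: B + Pmat A mu *m X + X *m Pmat D mu + mu^-1 *: (X *m C *m X)).

Lemma riccati_mapE X : riccati_map X = X + (2^-1 * mu^-1) *: riccati X.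
Proof.
rewrite /riccati_map /riccati /Pmat mulmxDl mulmxDr mul1mx mulmx1 -scalemxAl -scalemxAr.
apply/matrixP => i j; rewrite !mxE.
by field; exact: lt0r_neq0.
Qed.

Lemma riccati_map_fixpoint X : riccati_map X = X -> riccati X = 0.
Proof.
rewrite riccati_mapE => /eqP; rewrite -subr_eq0 addrAC subrr add0r.
by rewrite scaler_eq0 mulf_eq0 !invr_eq0 pnatr_eq0 (negbTE (lt0r_neq0 mu_gt0)) => /eqP.
Qed.

Lemma riccati_map_mono X Y :
  mx_nonneg X -> mxle X Y -> mxle (riccati_map X) (riccati_map Y).
Proof.
move=> X_ge0 XY; have [PA_ge0 _ _ PD_ge0] := Pmat_blocks_nonneg T_gen mu_gt0 T_diag_mu.
have C_ge0 := generator_dl_nonneg T_gen.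
apply: mxleZ; first by rewrite invr_ge0 ler0n.
apply: mxleD; first apply: mxleD; first apply: mxleD.
- exact: mxle_refl.
- exact: mxleMl.
- exact: mxleMr.
- apply: mxleZ; first by rewrite invr_ge0 ltW.
  by apply: mxleM => //; [exact: mx_nonnegM | exact: mxleMr].
Qed.

Lemma riccati_map0_nonneg : mx_nonneg (riccati_map 0).
Proof.
rewrite /riccati_map !mulmx0 !mul0mx scaler0 !addr0.
apply: mx_nonnegZ; first by rewrite invr_ge0 ler0n.
by apply: mx_nonnegZ; [rewrite invr_ge0 ltW | exact: generator_ur_nonneg].
Qed.

Lemma riccati_map_mxcvg (X : nat -> 'M[R]_(p, m)) L :
  mxcvg X L -> mxcvg (fun k => riccati_map (X k)) (riccati_map L).
Proof.
move=> XL; apply: mxcvgZ; apply: mxcvgD; first apply: mxcvgD; first apply: mxcvgD.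
- exact: mxcvg_cst.
- by apply: mxcvgM => //; exact: mxcvg_cst.
- by apply: mxcvgM => //; exact: mxcvg_cst.
- by apply: mxcvgZ; apply: mxcvgM => //; apply: mxcvgM => //; exact: mxcvg_cst.
Qed.

Lemma Psi_le_supersolution X : mx_nonneg X -> mxle (riccati X) 0 -> mxle Psi X.
Proof.
move=> X_ge0 ricX_le0.
have mapX_le : mxle (riccati_map X) X.
  move=> i j; rewrite riccati_mapE mxE [X in _ + X]mxE gerDl.
  apply: mulr_ge0_le0; first by rewrite mulr_ge0 // invr_ge0 ?ler0n ?ltW.
  by have := ricX_le0 i j; rewrite !mxE.
have [L [L_ge0 L_le mapL _]] :=
  iter_mxcvg_fixpoint riccati_map_mono riccati_map0_nonneg riccati_map_mxcvg X_ge0 mapX_le.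
exact: mxle_trans (Psi_minimal L_ge0 (riccati_map_fixpoint mapL)) L_le.
Qed.

Lemma riccati_map_substochastic X : mx_nonneg X ->
  mxle (X *m ones R m) (ones R p) -> mxle (riccati_map X *m ones R m) (ones R p).
Proof.
move=> X_ge0 Xe_le; set e := ones R m; set f := ones R p.
have [PA_ge0 _ _ PD_ge0] := Pmat_blocks_nonneg T_gen mu_gt0 T_diag_mu.
have [rowsum_u rowsum_d] := generator_rowsum_blocks T_gen.
have Af : A *m f = - (B *m e) by apply/eqP; rewrite -addr_eq0 rowsum_u.
have De : D *m e = - (C *m f) by apply/eqP; rewrite -addr_eq0 addrC rowsum_d.
set PA := Pmat A mu; set PD := Pmat D mu.
set V := 2^-1 *: (mu^-1 *: (B *m e) + PA *m f + X *m (PD *m e)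
                  + mu^-1 *: (X *m C *m f)).
have mapXe_le : mxle (riccati_map X *m e) V.
  rewrite /riccati_map -/PA -/PD -scalemxAl; do 3 rewrite mulmxDl.
  rewrite -!scalemxAl -!mulmxA.
  apply: mxleZ; first by rewrite invr_ge0 ler0n.
  apply: mxleD; first apply: mxleD; first apply: mxleD.
  - exact: mxle_refl.
  - exact: mxleMl.
  - exact: mxle_refl.
  - apply: mxleZ; first by rewrite invr_ge0 ltW.
    by rewrite mulmxA; apply: mxleMl => //; exact: mx_nonnegM (generator_dl_nonneg T_gen).
apply: mxle_trans mapXe_le _.
have -> : V = 2^-1 *: (f + X *m e).
  rewrite /V /PA /PD /Pmat !mulmxDl !mul1mx -!scalemxAl Af De.
  rewrite mulmxDr -scalemxAr mulmxN mulmxA.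
  by apply/matrixP => i j; rewrite !mxE; ring.
by move=> i j; have := Xe_le i j; rewrite !mxE; lra.
Qed.

Lemma Psi_substochastic : mxle (Psi *m ones R m) (ones R p).
Proof.
have mapPsi : mxle (riccati_map Psi) Psi.
  by rewrite riccati_mapE riccati_Psi scaler0 addr0; exact: mxle_refl.
have [L [L_ge0 L_le mapL iterL]] := iter_mxcvg_fixpoint riccati_map_mono
  riccati_map0_nonneg riccati_map_mxcvg Psi_nonneg mapPsi.
have iter_sub k : mx_nonneg (iter k riccati_map 0)
                  /\ mxle (iter k riccati_map 0 *m ones R m) (ones R p).
  elim: k => [|k [iter_ge0 iter_le]] /=.
    by rewrite mul0mx; split; [exact: mx_nonneg0 | exact/mx_nonneg_ge0/mx_nonneg_ones].
  split; last exact: riccati_map_substochastic.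
  apply: mx_nonneg_le riccati_map0_nonneg _.
  by apply: riccati_map_mono; [exact: mx_nonneg0 | exact: mx_nonneg_ge0].
have Le_le : mxle (L *m ones R m) (ones R p).
  have iterLe : mxcvg (fun k => iter k riccati_map 0 *m ones R m) (L *m ones R m).
    by apply: mxcvgM iterL _; exact: mxcvg_cst.
  by apply: mxcvg_le iterLe _ (fun k => (iter_sub k).2); exact: mxcvg_cst.
have Psi_le_L := Psi_minimal L_ge0 (riccati_map_fixpoint mapL).
by apply: mxle_trans Le_le; apply: mxleMr Psi_le_L; exact: mx_nonneg_ones.
Qed.

Lemma Umat_offdiag X : mx_nonneg X -> forall i j, i != j -> 0 <= U X i j.
Proof.
move=> X_ge0 i j ij; rewrite /Umat mxE addr_ge0 ?generator_dr_offdiag //.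
exact: mx_nonnegM (generator_dl_nonneg T_gen) X_ge0 i j.
Qed.

Lemma Umat_rowsum_le0 X : mx_nonneg X ->
  mxle (X *m ones R m) (ones R p) -> mxle (U X *m ones R m) 0.
Proof.
move=> X_ge0 Xe_le; have [_ rowsum_d] := generator_rowsum_blocks T_gen.
rewrite /Umat mulmxDl -mulmxA -rowsum_d addrC; apply: mxleD; last exact: mxle_refl.
exact: mxleMl (generator_dl_nonneg T_gen) Xe_le.
Qed.

Lemma resolvent_Umat X : mx_nonneg X -> mxle (X *m ones R m) (ones R p) ->
  (1%:M - lam^-1 *: U X) \in unitmx /\ mx_nonneg (invmx (1%:M - lam^-1 *: U X)).
Proof.
move=> X_ge0 Xe_le; apply: resolvent_unit_nonneg => //; first exact: Umat_offdiag.
exact: Umat_rowsum_le0.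
Qed.

Lemma unit_resolvent_Psi : (1%:M - lam^-1 *: U Psi) \in unitmx.
Proof. exact: (resolvent_Umat Psi_nonneg Psi_substochastic).1. Qed.

Lemma Wmat_nonneg : mx_nonneg W.
Proof.
apply: mx_nonnegM; last exact: (resolvent_Umat Psi_nonneg Psi_substochastic).2.
apply: Pmat_nonneg => //; first exact: Umat_offdiag Psi_nonneg.
move=> i; have Dii : - mu <= D i i.
  by have := T_diag_mu (rshift p i); rewrite ler_norml !mxE => /andP[].
rewrite /Umat mxE (le_trans Dii) // lerDl.
by have := mx_nonnegM (generator_dl_nonneg T_gen) Psi_nonneg; apply.
Qed.

Lemma lam_mu_inv_neq0 : lam^-1 + mu^-1 != 0.
Proof. by rewrite lt0r_neq0 // addr_gt0 ?invr_gt0. Qed.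

Definition top_defect Xb Xd :=
  Xb *m (1%:M - Xd) - (B + A *m Xb) *m (mu^-1 *: 1%:M + lam^-1 *: Xd).

Definition bottom_defect Xb Xd :=
  (1%:M - lam^-1 *: U Xb) *m Xd - (1%:M + mu^-1 *: U Xb).

Lemma top_defect_Psi : top_defect Psi W = 0.
Proof.
apply/eqP; rewrite subr_eq0 cayley_relation ?unit_resolvent_Psi ?lam_mu_inv_neq0 //.
by rewrite -riccati_UmatE riccati_Psi.
Qed.

Lemma bottom_defect_Psi : bottom_defect Psi W = 0.
Proof. by rewrite /bottom_defect cayley_mull ?unit_resolvent_Psi // subrr. Qed.

Lemma defects_eq0 Xb Xd : mx_nonneg Xb -> mxle Xb Psi ->
  top_defect Xb Xd = 0 -> bottom_defect Xb Xd = 0 -> Xb = Psi /\ Xd = W.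
Proof.
move=> Xb_ge0 Xb_le top0 /eqP; rewrite subr_eq0 => /eqP bottom0.
have Xbe_le : mxle (Xb *m ones R m) (ones R p).
  exact: mxle_trans (mxleMr (@mx_nonneg_ones R m) Xb_le) Psi_substochastic.
have unit_Xb := (resolvent_Umat Xb_ge0 Xbe_le).1.
have Xd_cayley := cayley_unique unit_Xb bottom0.
move: top0 => /eqP; rewrite subr_eq0 Xd_cayley cayley_relation ?lam_mu_inv_neq0 //.
rewrite -riccati_UmatE => /eqP ricXb.
by have <- : Xb = Psi := mxle_anti Xb_le (Psi_minimal Xb_ge0 ricXb).
Qed.

Lemma top_defect_eq0_ge Xb : mx_nonneg Xb -> mxle Xb Psi ->
  top_defect Xb W = 0 -> mxle Psi Xb.
Proof.
move=> Xb_ge0 Xb_le /eqP.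
rewrite subr_eq0 cayley_relation ?unit_resolvent_Psi ?lam_mu_inv_neq0 // => /eqP top0.
apply: Psi_le_supersolution => //.
have -> : riccati Xb = B + A *m Xb + Xb *m U Psi + Xb *m C *m (Xb - Psi).
  rewrite riccati_UmatE /Umat !mulmxDr !mulmxN !mulmxA.
  by apply/matrixP => i j; rewrite !mxE; ring.
rewrite top0 add0r.
apply: mxle_trans (_ : mxle _ (Xb *m C *m 0)) _; last by rewrite mulmx0; exact: mxle_refl.
apply: mxleMl; first exact: mx_nonnegM (generator_dl_nonneg T_gen).
by move=> i j; rewrite !mxE subr_le0.
Qed.

Local Notation J := (invmx (1%:M - mu^-1 *: A)).

Lemma resolvent_ul : (1%:M - mu^-1 *: A) \in unitmx /\ mx_nonneg J.
Proof.
apply: resolvent_unit_nonneg => //; first exact: generator_ul_offdiag.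
have [rowsum_u _] := generator_rowsum_blocks T_gen.
have -> : A *m ones R p = - (B *m ones R m) by apply/eqP; rewrite -addr_eq0 rowsum_u.
move=> i j; have := mx_nonnegM (generator_ur_nonneg T_gen) (@mx_nonneg_ones R m) i j.
by rewrite !mxE oppr_le0.
Qed.

Ltac mx_normalize :=
  do 3 (rewrite ?(mulmxDl, mulmxDr, mulNmx, mulmxN, mul1mx, mulmx1, mul0mx, mulmx0);
        rewrite -?(scalemxAl, scalemxAr) -?mulmxA).

Lemma Gmap_halved_right Xb Xd :
  Gmap (2^-1 *: block_mx 0 (mu^-1 *: B) 0 (Pmat D mu))
       (2^-1 *: block_mx (Pmat A mu) (lam^-1 *: B) (mu^-1 *: C) (Pmat D lam))
       (2^-1 *: block_mx (Pmat A lam) 0 (lam^-1 *: C) 0)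
       (block_mx 0 Xb 0 Xd)
  = block_mx 0 (Xb - 2^-1 *: top_defect Xb Xd) 0 (Xd - 2^-1 *: bottom_defect Xb Xd).
Proof.
rewrite /Gmap /top_defect /bottom_defect /Umat /Pmat -!scalemxAl !mulmx_block.
rewrite !scale_block_mx !add_block_mx.
have [lam_neq0 mu_neq0] := (lt0r_neq0 lam_gt0, lt0r_neq0 mu_gt0).
by congr block_mx; mx_normalize; apply/matrixP => i j; rewrite !mxE; field;
  rewrite ?lam_neq0 ?mu_neq0.
Qed.

Lemma Gmap_reduced_right Xb Xd :
  Gmap (block_mx 0 (J *m (mu^-1 *: B)) 0 W) (block_mx 0 (J *m (lam^-1 *: B)) 0 0)
       (block_mx (J *m Pmat A lam) 0 0 0) (block_mx 0 Xb 0 Xd)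
  = block_mx 0 (Xb - J *m top_defect Xb Xd) 0 W.
Proof.
rewrite /Gmap !mulmx_block !add_block_mx.
congr block_mx; [by mx_normalize; rewrite !addr0 | | by mx_normalize; rewrite !addr0..].
rewrite -[X in _ = X - _](mulKmx resolvent_ul.1) /top_defect /Pmat; mx_normalize.
by apply/matrixP => i j; rewrite !mxE; ring.
Qed.

Lemma is_Gmatrix_halved_qbd :
  is_Gmatrix ((1 / 2 : R) *: block_mx 0 (ursubmx (Pmat T mu)) 0 (drsubmx (Pmat T mu)))
    ((1 / 2 : R) *: block_mx (ulsubmx (Pmat T mu)) (ursubmx (Pmat T lam))
                             (dlsubmx (Pmat T mu)) (drsubmx (Pmat T lam)))
    ((1 / 2 : R) *: block_mx (ulsubmx (Pmat T lam)) 0 (dlsubmx (Pmat T lam)) 0)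
    (block_mx 0 Psi 0 W).
Proof.
rewrite !Pmat_block !block_mxKul !block_mxKur !block_mxKdl !block_mxKdr div1r.
have [PAm_ge0 Bm_ge0 Cm_ge0 PDm_ge0] := Pmat_blocks_nonneg T_gen mu_gt0 T_diag_mu.
have [PAl_ge0 Bl_ge0 Cl_ge0 PDl_ge0] := Pmat_blocks_nonneg T_gen lam_gt0 T_diag_lam.
have half_ge0 : (0 : R) <= 2^-1 by rewrite invr_ge0 ler0n.
have half_neq0 : (2^-1 : R) != 0 by rewrite invr_eq0 pnatr_eq0.
apply: is_Gmatrix_minimal_fixpoint.
- by apply: mx_nonnegZ => //; apply/mx_nonneg_block; split=> //; exact: mx_nonneg0.
- by apply: mx_nonnegZ => //; apply/mx_nonneg_block.
- by apply: mx_nonnegZ => //; apply/mx_nonneg_block; split=> //; exact: mx_nonneg0.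
- apply/mx_nonneg_block; split; try exact: mx_nonneg0.
    exact: Psi_nonneg.
  exact: Wmat_nonneg.
- by rewrite Gmap_halved_right top_defect_Psi bottom_defect_Psi !scaler0 !subr0.
move=> X X_ge0 X_le; have X_eq := nonneg_le_zero_left_column X_ge0 X_le.
move: X_ge0 X_le; rewrite X_eq => /mx_nonneg_block[_ Xb_ge0 _ _] /mxle_block[_ Xb_le _ _].
rewrite Gmap_halved_right => /eq_block_mx[_ /subr_eq_id/eqP top0 _ /subr_eq_id/eqP bottom0].
move: top0 bottom0; rewrite !scaler_eq0 (negbTE half_neq0) /= => /eqP top0 /eqP bottom0.
by have [-> ->] := defects_eq0 Xb_ge0 Xb_le top0 bottom0; exact: mxle_refl.
Qed.

Lemma is_Gmatrix_reduced_qbd :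
  is_Gmatrix (block_mx 0 (J *m ursubmx (Pmat T mu)) 0 W)
    (block_mx 0 (J *m ursubmx (Pmat T lam)) 0 0)
    (block_mx (J *m ulsubmx (Pmat T lam)) 0 0 0)
    (block_mx 0 Psi 0 W).
Proof.
rewrite !Pmat_block !block_mxKul !block_mxKur.
have [_ Bm_ge0 _ _] := Pmat_blocks_nonneg T_gen mu_gt0 T_diag_mu.
have [PAl_ge0 Bl_ge0 _ _] := Pmat_blocks_nonneg T_gen lam_gt0 T_diag_lam.
have [unit_ul J_ge0] := resolvent_ul.
have W_ge0 := Wmat_nonneg.
apply: is_Gmatrix_minimal_fixpoint.
- by apply/mx_nonneg_block; split; try exact: mx_nonneg0; try exact: mx_nonnegM.
- by apply/mx_nonneg_block; split; try exact: mx_nonneg0; exact: mx_nonnegM.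
- by apply/mx_nonneg_block; split; try exact: mx_nonneg0; exact: mx_nonnegM.
- by apply/mx_nonneg_block; split; try exact: mx_nonneg0; try exact: Psi_nonneg.
- by rewrite Gmap_reduced_right top_defect_Psi mulmx0 subr0.
move=> X X_ge0 X_le; have X_eq := nonneg_le_zero_left_column X_ge0 X_le.
move: X_ge0 X_le; rewrite X_eq => /mx_nonneg_block[_ Xb_ge0 _ _] /mxle_block[_ Xb_le _ _].
rewrite Gmap_reduced_right => /eq_block_mx[_ /subr_eq_id J_top0 _ W_eq].
rewrite -W_eq in J_top0 *.
have top0 : top_defect (ursubmx X) W = 0.
  by rewrite -(mulKVmx unit_ul (top_defect _ _)) J_top0 mulmx0.
apply/mxle_block; split; try exact: mxle_refl.
exact: top_defect_eq0_ge.
Qed.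

End FluidQueue.

Theorem theorem5 (R : realType) (p m : nat) (hp : (0 < p)%N) (hm : (0 < m)%N)
  (T : 'M[R]_(p + m)) (Psi : 'M[R]_(p, m)) (lam mu : R) :
  is_generator T ->
  is_min_nonneg_sol T Psi ->
  0 < lam -> 0 < mu ->
  (forall i, `|T i i| <= lam) -> (forall i, `|T i i| <= mu) ->
  let Pl := Pmat T lam in
  let Pm := Pmat T mu in
  let W := Wmat T Psi lam mu in
  let J := invmx (1%:M - mu^-1 *: ulsubmx T) in
  let C'm := (1 / 2 : R) *: block_mx 0 (ursubmx Pm) 0 (drsubmx Pm) in
  let C'0 := (1 / 2 : R) *: block_mx (ulsubmx Pm) (ursubmx Pl) (dlsubmx Pm) (drsubmx Pl) in
  let C'p := (1 / 2 : R) *: block_mx (ulsubmx Pl) 0 (dlsubmx Pl) 0 in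
  let Cm := block_mx 0 (J *m ursubmx Pm) 0 W in
  let C0 := block_mx 0 (J *m ursubmx Pl) 0 0 in
  let Cp := block_mx (J *m ulsubmx Pl) 0 0 0 in
  let G := block_mx 0 Psi 0 W in
  is_Gmatrix C'm C'0 C'p G /\ is_Gmatrix Cm C0 Cp G.
Proof.
move=> T_gen Psi_min lam_gt0 mu_gt0 T_diag_lam T_diag_mu.
by split; [exact: is_Gmatrix_halved_qbd | exact: is_Gmatrix_reduced_qbd].
Qed.
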